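(* Let $(\mathbf C,I)$ be a finite-type based chain complex of real inner product spaces, let $M$ be an $(n,n-1)$-free Morse matching on it with Morse retraction $\Phi:\mathbf D\to\mathbf C$, $\Psi:\mathbf C\to\mathbf D$ where $\mathbf D=\mathbf C^M$, and let $M'$ be an $(n,n-1)$-free Morse matching on the based complex $\mathbf D$ with Morse retraction $\Phi':\mathbf E\to\mathbf D$, $\Psi':\mathbf D\to\mathbf E$ where $\mathbf E=\mathbf D^{M'}$. Then for all $s\in\mathbf C_n$, $$\mathcal L_s(\Psi'\Psi,\Phi\Phi')\le\mathcal L_s(\Psi,\Phi)+\mathcal L_{\Psi(s)}(\Psi',\Phi'),$$ i.e. $\lVert s-\Phi\Phi'\Psi'\Psi s\rVert_{\mathbf C_n}\le\lVert s-\Phi\Psi s\rVert_{\mathbf C_n}+\lVert\Psi s-\Phi'\Psi'\Psi s\rVert_{\mathbf D_n}$.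
   Context: Based chain complex: chain complex $(\mathbf C,\partial)$ of finite-dimensional real inner product spaces $\mathbf C_n$, $n\ge0$, with disjoint finite index sets $I_n$ and $\mathbf C_n=\bigoplus_{\alpha\in I_n}C_\alpha$; $\partial_{\beta,\alpha}=\pi_\beta\partial_n i_\alpha$. Graph: edges $\alpha\to\beta$ when $\partial_{\beta,\alpha}\ne0$. Morse matching: edge set $M$ with each cell on at most one edge, $\partial_{\beta,\alpha}$ an isomorphism for $\alpha\to\beta\in M$, and ''directed path from $\alpha$ to $\beta$ in the graph with $M$ reversed'' a partial order on each $I_n$; $M^0$ = unmatched cells; $(n,n-1)$-free means no edge of $M$ joins an $n$-cell to an $(n-1)$-cell. With $\Gamma_{\beta,\alpha}$ the sum over directed paths from $\alpha$ to $\beta$ in the reversed graph of composites of $\partial_{\sigma_{i+1},\sigma_i}$ (ordinary steps) and $-\partial_{\sigma_i,\sigma_{i+1}}^{-1}$ (reversed matched edges): Morse complex $\mathbf C^M_n=\bigoplus_{\alpha\in I_n\cap M^0}C_\alpha$ (based by $I\cap M^0$, restricted inner product) with boundary $\sum_{\beta\in M^0\cap I_{n-1}}\Gamma_{\beta,\alpha}$; Morse retraction $\Phi=\sum_{\beta\in I_n}\Gamma_{\beta,\alpha}$ on critical $C_\alpha$, $\Psi=\sum_{\beta\in M^0\cap I_n}\Gamma_{\beta,\alpha}$ on $C_\alpha$. For chain maps $\Phi,\Psi$ and a signal $s$, the topological loss is $\mathcal L_s(\Psi,\Phi)=\lVert s-\Phi\Psi s\rVert$. *)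

From HB Require Import structures.
From mathcomp Require Import all_boot all_order all_algebra.
From mathcomp Require Import reals.
Set Implicit Arguments. Unset Strict Implicit. Unset Printing Implicit Defensive.
Import Order.TTheory GRing.Theory Num.Theory.
Local Open Scope ring_scope.

(* Cells [a : cell] carry a degree
   [deg a] (so I_n = [pred a | deg a == n]) and a cell space
   C_a = 'rV[R]_(cdim a) with its standard inner product; C_n is the
   orthogonal direct sum of the C_a, deg a = n.  The block
   [bd a b : 'M_(cdim a, cdim b)] is ∂_{b,a} : C_a -> C_b acting on row
   vectors (u |-> u *m bd a b). *)
Record bcomplex (R : realType) := BCx {
  cell : finType;
  deg : cell -> nat;
  cdim : cell -> nat;
  bd : forall a b : cell, 'M[R]_(cdim a, cdim b) }.

Arguments cell {R}. Arguments deg {R}. Arguments cdim {R}. Arguments bd {R}.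

Definition chain {R : realType} (C : bcomplex R) := forall a : cell C, 'rV[R]_(cdim C a).

Section Defs.
Variable R : realType.
Variable C : bcomplex R.
Local Notation T := (cell C).


Definition is_based_complex : Prop :=
  (forall a b : T, bd C a b != 0 -> deg C a = (deg C b).+1) /\
  (forall a c : T, \sum_(b : T) (bd C a b *m bd C b c) = 0).

Definition edge (a b : T) : bool := bd C a b != 0.

Variable M : rel T. (* the matching, as a set of edges a -> b *)

Definition rstep : rel T := fun a b => (edge a b && ~~ M a b) || M b a.

Definition stepw (a b : T) : 'M[R]_(cdim C a, cdim C b) :=
  if M b a then - pinvmx (bd C b a) else bd C a b.

Fixpoint pathw (a : T) (p : seq T) : 'M[R]_(cdim C a, cdim C (last a p)) :=
  match p return 'M[R]_(cdim C a, cdim C (last a p)) with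
  | [::] => 1%:M
  | b :: q => stepw a b *m pathw b q
  end.

Definition po_on (P : pred T) (r : rel T) : Prop :=
  (forall a, P a -> r a a) /\
  (forall a b c, P a -> P b -> P c -> r a b -> r b c -> r a c) /\
  (forall a b, P a -> P b -> r a b -> r b a -> a = b).

Definition is_morse_matching : Prop :=
  (forall a b, M a b -> edge a b) /\
  (forall c : T, #|[set e : T * T | M e.1 e.2 && ((e.1 == c) || (e.2 == c))]| <= 1)%N /\
  (forall a b, M a b -> exists G : 'M[R]_(cdim C b, cdim C a),
      bd C a b *m G = 1%:M /\ G *m bd C a b = 1%:M) /\
  (forall n : nat, po_on [pred a | deg C a == n] (connect rstep)).

Definition nfree (n : nat) : Prop :=
  forall a b, M a b -> ~ (deg C a = n /\ (deg C b).+1 = n).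

Definition critical : pred T := fun a => [forall b, ~~ M a b && ~~ M b a].

(* Γ_{b,a} : C_a -> C_b, the sum over directed paths from a to b in the
   reversed graph.  Under the Morse-matching hypotheses the reversed graph
   is acyclic, so every path has fewer than #|T| steps. *)
Definition Gamma (b a : T) : 'M[R]_(cdim C a, cdim C b) :=
  \sum_(k < #|T|) \sum_(p : k.-tuple T | path rstep a p && (last a p == b))
     conform_mx 0 (pathw a p).

Definition mcell := {a : T | critical a}.

Definition morse_bd (a b : mcell) : 'M[R]_(cdim C (val a), cdim C (val b)) :=
  if deg C (val a) == (deg C (val b)).+1 then Gamma (val b) (val a) else 0.

Definition morse_cx : bcomplex R :=
  @BCx R mcell (fun a => deg C (val a)) (fun a => cdim C (val a)) morse_bd.

Definition morsePhi (x : chain morse_cx) : chain C :=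
  fun b => \sum_(a : mcell | deg C (val a) == deg C b) x a *m Gamma b (val a).

Definition morsePsi (x : chain C) : chain morse_cx :=
  fun b : mcell => \sum_(a : T | deg C a == deg C (val b)) x a *m Gamma (val b) a.

End Defs.


Definition cnorm (R : realType) (C : bcomplex R) (n : nat) (x : chain C) : R :=
  Num.sqrt (\sum_(a : cell C | deg C a == n) \sum_(i < cdim C a) (x a 0 i) ^+ 2).

Definition topo_loss (R : realType) (C D : bcomplex R) (n : nat) (s : chain C)
  (Psi : chain C -> chain D) (Phi : chain D -> chain C) : R :=
  cnorm n (fun a => s a - Phi (Psi s) a).

Arguments is_based_complex {R} C.
Arguments is_morse_matching {R} C M.
Arguments nfree {R} C M n.
Arguments morse_cx {R} C M.
Arguments morsePhi {R} C M x _.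
Arguments morsePsi {R} C M x _.
Arguments cnorm {R} C n x.
Arguments topo_loss {R} C D n s Psi Phi.

From HB Require Import structures.
From mathcomp Require Import all_boot all_order all_algebra.
From mathcomp Require Import reals ring.
Set Implicit Arguments. Unset Strict Implicit. Unset Printing Implicit Defensive.
Import Order.TTheory GRing.Theory Num.Theory.
Local Open Scope ring_scope.

(* In degree n,  s - Phi Phi' Psi' Psi s = (s - Phi Psi s) + Phi (Psi s - Phi' Psi' Psi s),
   so by the triangle inequality it suffices that Phi preserves the norm of C^M_n.
   This is where (n,n-1)-freeness of M enters: a gradient path leaving a critical
   n-cell first drops to degree n-1, and it can only climb back up along a reversed
   matched edge, which would join an (n-1)-cell to an n-cell.  So the only path from
   a critical n-cell to an n-cell is the empty one, Gamma is the identity on critical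
   n-cells, and Phi restricted to degree n is the inclusion of the critical cells. *)

Section SumOfSquares.
Variables (R : rcfType) (I : Type) (r : seq I) (P : pred I).
Local Notation sum F := (\sum_(i <- r | P i) F i).

Lemma sum_mul_sqr_le (f g : I -> R) :
  sum (fun i => f i * g i) ^+ 2
  <= sum (fun i => f i ^+ 2) * sum (fun i => g i ^+ 2).
Proof.
have lagrange : \sum_(i <- r | P i) \sum_(j <- r | P j) (f i * g j - f j * g i) ^+ 2
    = (sum (fun i => f i ^+ 2) * sum (fun i => g i ^+ 2)
       - sum (fun i => f i * g i) ^+ 2) *+ 2.
  rewrite mulrnBl mulr2n [X in _ = _ + X - _]mulrC expr2 !mulr_suml.
  rewrite -big_split -sumrMnl -sumrB; apply: eq_bigr => i _.
  rewrite !mulr_sumr -big_split -sumrMnl -sumrB; apply: eq_bigr => j _.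
  rewrite /=; ring.
rewrite -subr_ge0 -(pmulrn_lge0 _ (ltn0Sn 1)) -lagrange.
by apply: sumr_ge0 => i _; apply: sumr_ge0 => j _; apply: sqr_ge0.
Qed.

Lemma sqrt_sum_sqrD_le (f g : I -> R) :
  Num.sqrt (sum (fun i => (f i + g i) ^+ 2))
  <= Num.sqrt (sum (fun i => f i ^+ 2)) + Num.sqrt (sum (fun i => g i ^+ 2)).
Proof.
set A := sum (fun i => f i ^+ 2); set B := sum (fun i => g i ^+ 2).
have A_ge0 : 0 <= A by apply: sumr_ge0 => i _; apply: sqr_ge0.
have B_ge0 : 0 <= B by apply: sumr_ge0 => i _; apply: sqr_ge0.
have cauchy_schwarz : sum (fun i => f i * g i) <= Num.sqrt A * Num.sqrt B.
  rewrite -sqrtrM // (le_trans (ler_norm _)) // -sqrtr_sqr.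
  exact/ler_wsqrtr/sum_mul_sqr_le.
have -> : sum (fun i => (f i + g i) ^+ 2) = A + sum (fun i => f i * g i) *+ 2 + B.
  by rewrite -sumrMnl -!big_split; apply: eq_bigr => i _; rewrite sqrrD.
rewrite -[leRHS]ger0_norm ?addr_ge0 ?sqrtr_ge0 // -sqrtr_sqr ler_wsqrtr //.
by rewrite sqrrD !sqr_sqrtr // lerD2r lerD2l lerMn2r.
Qed.
End SumOfSquares.

Section ChainNorm.
Variables (R : realType) (C : bcomplex R) (n : nat).

Lemma cnormE (x : chain C) :
  cnorm C n x = Num.sqrt (\sum_(p : {a : cell C & 'I_(cdim C a)} | deg C (tag p) == n)
                            x (tag p) 0 (tagged p) ^+ 2).
Proof. by rewrite /cnorm sig_big_dep; under eq_bigl do rewrite andbT. Qed.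

Lemma eq_cnorm (x y : chain C) :
  (forall a, deg C a = n -> x a = y a) -> cnorm C n x = cnorm C n y.
Proof. by move=> eq_xy; rewrite /cnorm; under eq_bigr => a /eqP/eq_xy -> do []. Qed.

Lemma cnormD_le (x y : chain C) :
  cnorm C n (fun a => x a + y a) <= cnorm C n x + cnorm C n y.
Proof. by rewrite !cnormE; under eq_bigr do rewrite mxE; apply: sqrt_sum_sqrD_le. Qed.

End ChainNorm.

Section MorseRetractionInDegreeN.
Variables (R : realType) (C : bcomplex R) (M : rel (cell C)) (n : nat).
Hypothesis edge_deg : forall a b : cell C, edge a b -> deg C a = (deg C b).+1.
Hypothesis matched_edge : forall a b, M a b -> edge a b.
Hypothesis M_nfree : nfree C M n.

Lemma rstep_deg a b : rstep M a b ->
  deg C a = (deg C b).+1 \/ M b a /\ deg C b = (deg C a).+1.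
Proof.
case/orP => [/andP[/edge_deg deg_ab _] | Mba]; first by left.
by right; split => //; apply/edge_deg/matched_edge.
Qed.

Lemma rstep_deg_lt a b : (deg C a < n)%N -> rstep M a b -> (deg C b < n)%N.
Proof.
move=> lt_an /rstep_deg [deg_ab | [Mba deg_ba]].
  by rewrite deg_ab in lt_an; apply: ltnW.
rewrite deg_ba ltn_neqAle lt_an andbT; apply/eqP => deg_bn.
by apply: (M_nfree Mba); rewrite deg_ba.
Qed.

Lemma path_deg_lt a p : (deg C a < n)%N -> path (rstep M) a p -> (deg C (last a p) < n)%N.
Proof.
elim: p a => [|b p IHp] a //= lt_an /andP[step_ab path_bp].
exact: IHp (rstep_deg_lt lt_an step_ab) path_bp.
Qed.

Lemma critical_path_nil a p : critical M a -> deg C a = n ->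
  path (rstep M) a p -> deg C (last a p) = n -> p = [::].
Proof.
move=> crit_a deg_a; case: p => [|b p] //= /andP[step_ab path_bp] deg_last.
have deg_ab : deg C a = (deg C b).+1.
  move/forallP: crit_a => /(_ b) /andP[_ not_Mba].
  by move: step_ab; rewrite /rstep (negbTE not_Mba) orbF => /andP[/edge_deg].
have := path_deg_lt (a := b) _ path_bp.
by rewrite deg_last -deg_a deg_ab ltnn ltnSn => /(_ isT).
Qed.


Lemma Gamma_eq0 a b : critical M a -> deg C a = n -> deg C b = n -> a != b ->
  Gamma M b a = 0.
Proof.
move=> crit_a deg_a deg_b neq_ab; apply: big1 => k _.
apply: big1 => p /andP[path_p /eqP last_p].
have p_nil := critical_path_nil crit_a deg_a path_p (etrans (congr1 _ last_p) deg_b).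
by move: neq_ab; rewrite -last_p p_nil eqxx.
Qed.

Lemma Gamma_id a : critical M a -> deg C a = n -> Gamma M a a = 1%:M.
Proof.
move=> crit_a deg_a.
have cells_gt0 : (0 < #|cell C|)%N by apply/card_gt0P; exists a.
rewrite /Gamma (bigD1 (Ordinal cells_gt0)) //= [X in _ + X]big1 ?addr0; last first.
  move=> k k_neq0; apply: big1 => p /andP[path_p /eqP last_p]; exfalso.
  have p_nil := critical_path_nil crit_a deg_a path_p (etrans (congr1 _ last_p) deg_a).
  by move: k_neq0 (size_tuple p); rewrite p_nil -(inj_eq val_inj) /= => /[swap] <-.
by rewrite (big_pred1 [tuple]) ?conform_mx_id // => p; rewrite tuple0 /= eqxx.
Qed.

Lemma morsePhi_critical z b (crit_b : critical M b) : deg C b = n ->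
  morsePhi C M z b = z (exist _ b crit_b).
Proof.
move=> deg_b; rewrite /morsePhi (bigD1 (exist _ b crit_b)) /= ?deg_b //.
rewrite Gamma_id // mulmx1 big1 ?addr0 // => a /andP[/eqP deg_a neq_ab].
by rewrite Gamma_eq0 ?mulmx0 ?deg_a //; apply: valP.
Qed.

Lemma morsePhi_noncritical z b : ~~ critical M b -> deg C b = n ->
  morsePhi C M z b = 0.
Proof.
move=> noncrit_b deg_b; rewrite /morsePhi big1 // => a /eqP deg_a.
rewrite Gamma_eq0 ?mulmx0 ?deg_a //; first exact: valP.
by apply: contraNneq noncrit_b => <-; apply: valP.
Qed.

Lemma morsePhiB (z1 z2 : chain (morse_cx C M)) b :
  morsePhi C M (fun a => z1 a - z2 a) b = morsePhi C M z1 b - morsePhi C M z2 b.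
Proof. by rewrite /morsePhi -sumrB; apply: eq_bigr => a _; rewrite mulmxBl. Qed.

Lemma cnorm_morsePhi z : cnorm C n (morsePhi C M z) = cnorm (morse_cx C M) n z.
Proof.
rewrite /cnorm; congr Num.sqrt.
rewrite (bigID (critical M)) /= [X in _ + X]big1 ?addr0; last first.
  move=> b /andP[/eqP deg_b noncrit_b].
  by rewrite morsePhi_noncritical //; apply: big1 => i _; rewrite mxE expr0n.
rewrite (reindex_omap (val : mcell M -> cell C) insub); last first.
  by move=> b /andP[_ crit_b]; rewrite insubT.
apply: eq_big => [[b crit_b] | [b crit_b]] /=; first by rewrite insubT /= crit_b eqxx !andbT.
move=> /andP[/andP[/eqP deg_b _] _].
by apply: eq_bigr => i _; rewrite morsePhi_critical.
Qed.

End MorseRetractionInDegreeN.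

Theorem mainTheorem16 (R : realType) (C : bcomplex R)
  (M : rel (cell C)) (M' : rel (cell (morse_cx C M))) (n : nat) (s : chain C) :
  is_based_complex C ->
  is_morse_matching C M -> nfree C M n ->
  is_morse_matching (morse_cx C M) M' -> nfree (morse_cx C M) M' n ->
  (forall a : cell C, deg C a != n -> s a = 0) ->
  topo_loss C (morse_cx (morse_cx C M) M') n s
    (fun x => morsePsi (morse_cx C M) M' (morsePsi C M x))
    (fun y => morsePhi C M (morsePhi (morse_cx C M) M' y))
  <= topo_loss C (morse_cx C M) n s (morsePsi C M) (morsePhi C M)
     + topo_loss (morse_cx C M) (morse_cx (morse_cx C M) M') n (morsePsi C M s)
         (morsePsi (morse_cx C M) M') (morsePhi (morse_cx C M) M').
Proof.
move=> [edge_deg _] [matched_edge _] M_nfree _ _ _.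
set y := morsePsi (morse_cx C M) M' (morsePsi C M s).
set z := fun a => morsePsi C M s a - morsePhi (morse_cx C M) M' y a.
rewrite /topo_loss -(cnorm_morsePhi edge_deg matched_edge M_nfree z).
rewrite (eq_cnorm (y := fun a => s a - morsePhi C M (morsePsi C M s) a + morsePhi C M z a)).
  exact: cnormD_le.
by move=> a _; rewrite morsePhiB addrA subrK.
Qed.
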